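(* Let $\sigma:\mathbf R\to\mathbf R$ be a non-decreasing $L$-Lipschitz function, let $A\in\mathbf R^{n\times k}$, $b\in\mathbf R^n$, let $h>0$ and let $\alpha\in(0,1)$. Define $\Xi:\mathbf R^k\to\mathbf R^k$ by $\Xi(x)=x-hA^\top\sigma(Ax+b)$, where $\sigma$ is applied componentwise. If \[h\,\|A\|^2\le 2\alpha/L,\] then $\Xi$ is $\alpha$-averaged.
   Context: $\mathbf R^k$ carries the Euclidean norm $\|\cdot\|$; $\|A\|$ denotes the spectral (operator) norm of $A$. An operator $T$ is non-expansive if $\|T(x)-T(y)\|\le\|x-y\|$ for all $x,y$. For $\alpha\in(0,1)$, an operator $\Xi:\mathbf R^k\to\mathbf R^k$ is called $\alpha$-averaged if there exists a non-expansive $T:\mathbf R^k\to\mathbf R^k$ with $\Xi=(1-\alpha)\mathrm{id}+\alpha T$. *)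

From HB Require Import structures.
From mathcomp Require Import all_boot all_order all_algebra.
From mathcomp Require Import all_classical all_reals.
Set Implicit Arguments. Unset Strict Implicit. Unset Printing Implicit Defensive.
Import Order.TTheory GRing.Theory Num.Theory.
Local Open Scope ring_scope.
Local Open Scope classical_set_scope.

Definition enorm (R : realType) (k : nat) (x : 'cV[R]_k) : R :=
  Num.sqrt (\sum_(i < k) x i 0 ^+ 2).

Definition opnorm (R : realType) (n k : nat) (A : 'M[R]_(n, k)) : R :=
  reals.sup [set enorm (A *m x) | x in [set x : 'cV[R]_k | enorm x <= 1]].

Definition nonexpansive (R : realType) (k : nat) (T : 'cV[R]_k -> 'cV[R]_k) :=
  forall x y, enorm (T x - T y) <= enorm (x - y).

Definition averaged (R : realType) (k : nat) (alpha : R)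
    (Xi : 'cV[R]_k -> 'cV[R]_k) :=
  exists T : 'cV[R]_k -> 'cV[R]_k,
    nonexpansive T /\ forall x, Xi x = (1 - alpha) *: x + alpha *: T x.

Definition lipschitz_with (R : realType) (L : R) (f : R -> R) :=
  forall x y, `|f x - f y| <= L * `|x - y|.

Definition nondecreasing_fun (R : realType) (f : R -> R) :=
  forall x y, x <= y -> f x <= f y.

Definition cmap (R : realType) (n : nat) (f : R -> R) (v : 'cV[R]_n) : 'cV[R]_n :=
  \col_i f (v i 0).

(* Write G x = A^T sigma(A x + b).  A nondecreasing L-Lipschitz scalar map satisfies
   (sigma u - sigma v)^2 <= L (sigma u - sigma v)(u - v), i.e. it is 1/L-cocoercive, and
   moving A^T across the inner product turns this into 1/(L |A|^2)-cocoercivity of G.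
   For a 1/M-cocoercive G and 0 <= c <= 2/M, expanding |(x - y) - c (G x - G y)|^2 shows
   that id - c G is nonexpansive.  Finally Xi = (1 - alpha) id + alpha (id - (h/alpha) G),
   and the hypothesis on h says exactly that (h/alpha) L |A|^2 <= 2. *)

From mathcomp Require Import all_boot all_order all_algebra.
From mathcomp Require Import all_classical all_reals.
From mathcomp Require Import ring lra.
Import Order.TTheory GRing.Theory Num.Theory.
Local Open Scope ring_scope.
Local Open Scope classical_set_scope.
Set Implicit Arguments. Unset Strict Implicit.

Section Dot.
Variable R : realType.
Implicit Types (m n : nat) (a : R).

Definition dot m (x y : 'cV[R]_m) : R := (x^T *m y) 0 0.

Lemma dotE m (x y : 'cV[R]_m) : dot x y = \sum_i x i 0 * y i 0.
Proof. by rewrite /dot mxE; apply: eq_bigr => i _; rewrite mxE. Qed.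

Lemma dotC m (x y : 'cV[R]_m) : dot x y = dot y x.
Proof. by rewrite !dotE; apply: eq_bigr => i _; rewrite mulrC. Qed.

Lemma dotBl m (x y z : 'cV[R]_m) : dot (x - y) z = dot x z - dot y z.
Proof. by rewrite /dot linearB mulmxBl !mxE. Qed.

Lemma dotBr m (x y z : 'cV[R]_m) : dot x (y - z) = dot x y - dot x z.
Proof. by rewrite ![dot x _]dotC dotBl. Qed.

Lemma dotZl m a (x y : 'cV[R]_m) : dot (a *: x) y = a * dot x y.
Proof. by rewrite /dot linearZ -scalemxAl mxE. Qed.

Lemma dotZr m a (x y : 'cV[R]_m) : dot x (a *: y) = a * dot x y.
Proof. by rewrite ![dot x _]dotC dotZl. Qed.

Lemma dot_trmx_mull n m (A : 'M[R]_(n, m)) x y : dot (A^T *m x) y = dot x (A *m y).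
Proof. by rewrite /dot trmx_mul trmxK mulmxA. Qed.

Lemma dot_sqrE m (x : 'cV[R]_m) : dot x x = \sum_i x i 0 ^+ 2.
Proof. by rewrite dotE; apply: eq_bigr => i _; rewrite expr2. Qed.

Lemma dot_ge0 m (x : 'cV[R]_m) : 0 <= dot x x.
Proof. by rewrite dot_sqrE sumr_ge0 // => i _; rewrite sqr_ge0. Qed.

Lemma dot_eq0 m (x : 'cV[R]_m) : (dot x x == 0) = (x == 0).
Proof.
apply/eqP/eqP => [|->]; last by rewrite dotE big1 // => i _; rewrite mxE mul0r.
rewrite dot_sqrE => /(psumr_eq0P (fun i _ => sqr_ge0 (x i 0))) x0.
by apply/matrixP => i j; rewrite ord1 mxE; apply/eqP; rewrite -sqrf_eq0 x0.
Qed.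

Lemma enormE m (x : 'cV[R]_m) : enorm x = Num.sqrt (dot x x).
Proof. by rewrite dot_sqrE. Qed.

Lemma sqr_enorm m (x : 'cV[R]_m) : enorm x ^+ 2 = dot x x.
Proof. by rewrite enormE sqr_sqrtr ?dot_ge0. Qed.

Lemma enorm_ge0 m (x : 'cV[R]_m) : 0 <= enorm x.
Proof. exact: sqrtr_ge0. Qed.

Lemma ler_enorm m (x y : 'cV[R]_m) : (enorm x <= enorm y) = (dot x x <= dot y y).
Proof. by rewrite !enormE ler_sqrt ?dot_ge0. Qed.

Lemma enormZ m a (x : 'cV[R]_m) : enorm (a *: x) = `|a| * enorm x.
Proof. by rewrite !enormE dotZl dotZr mulrA -expr2 sqrtrM ?sqr_ge0 // sqrtr_sqr. Qed.

Lemma enorm_eq0 m (x : 'cV[R]_m) : (enorm x == 0) = (x == 0).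
Proof. by rewrite enormE sqrtr_eq0 -dot_eq0 eq_le dot_ge0 andbT. Qed.

Lemma enorm0 m : enorm (0 : 'cV[R]_m) = 0.
Proof. by apply/eqP; rewrite enorm_eq0. Qed.

Lemma dot_sqr_le m (x y : 'cV[R]_m) : dot x y ^+ 2 <= dot x x * dot y y.
Proof.
have [->|y0] := eqVneq y 0.
  by rewrite -(scale0r 0) !dotZr !mul0r expr0n mulr0.
have yy_gt0 : 0 < dot y y by rewrite lt_def dot_eq0 y0 dot_ge0.
set z := dot y y *: x - dot x y *: y.
have : 0 <= dot z z by exact: dot_ge0.
have -> : dot z z = dot y y * (dot x x * dot y y - dot x y ^+ 2).
  by rewrite /z !(dotBl, dotBr, dotZl, dotZr) [dot y x]dotC; ring.
by rewrite pmulr_rge0 // subr_ge0.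
Qed.

Lemma dot_le_enorm m (x y : 'cV[R]_m) : dot x y <= enorm x * enorm y.
Proof.
rewrite (le_trans (ler_norm _)) // -(ler_pXn2r (n := 2)) ?nnegrE ?mulr_ge0 ?enorm_ge0 //.
by rewrite real_normK ?num_real // exprMn !sqr_enorm dot_sqr_le.
Qed.
End Dot.

Section OperatorNorm.
Variables (R : realType) (n m : nat) (A : 'M[R]_(n, m)).

Lemma mulmx_dot_row (x : 'cV[R]_m) i : (A *m x) i 0 = dot (row i A)^T x.
Proof. by rewrite dotE mxE; apply: eq_bigr => j _; rewrite !mxE. Qed.

Lemma dot_mulmx_le (x : 'cV[R]_m) :
  dot (A *m x) (A *m x) <= (\sum_i dot (row i A)^T (row i A)^T) * dot x x.
Proof.
rewrite dot_sqrE mulr_suml; apply: ler_sum => i _.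
by rewrite mulmx_dot_row dot_sqr_le.
Qed.

Let opnorm_set := [set enorm (A *m x) | x in [set x : 'cV[R]_m | enorm x <= 1]].

Lemma opnorm_set0 : opnorm_set 0.
Proof. by exists 0; rewrite /= ?mulmx0 enorm0. Qed.

Lemma opnorm_has_sup : has_sup opnorm_set.
Proof.
split; first by exists 0; exact: opnorm_set0.
exists (Num.sqrt (\sum_i dot (row i A)^T (row i A)^T)) => _ [x /= x_le1 <-].
rewrite enormE ler_wsqrtr // (le_trans (dot_mulmx_le x)) // ler_piMr ?sumr_ge0 //.
  by move=> i _; exact: dot_ge0.
by rewrite -sqr_enorm exprn_ile1 ?enorm_ge0.
Qed.

Lemma opnorm_ge0 : 0 <= opnorm A.
Proof. exact: sup_upper_bound opnorm_has_sup _ opnorm_set0. Qed.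

Lemma enorm_mulmx_le (x : 'cV[R]_m) : enorm (A *m x) <= opnorm A * enorm x.
Proof.
have [->|x0] := eqVneq x 0.
  by rewrite mulmx0 !enorm0 mulr0.
have nx_gt0 : 0 < enorm x by rewrite lt_def enorm_eq0 x0 enorm_ge0.
set u := (enorm x)^-1 *: x.
have enorm_u : enorm u = 1 by rewrite enormZ ger0_norm ?invr_ge0 ?enorm_ge0 // mulVf ?gt_eqF.
have -> : enorm (A *m x) = enorm (A *m u) * enorm x.
  by rewrite -scalemxAr enormZ ger0_norm ?invr_ge0 ?enorm_ge0 // mulrAC mulVf ?gt_eqF ?mul1r.
rewrite ler_wpM2r ?enorm_ge0 //.
by apply: sup_upper_bound opnorm_has_sup _ _; exists u; rewrite /= ?enorm_u.
Qed.

Lemma enorm_trmx_mulmx_le (y : 'cV[R]_n) : enorm (A^T *m y) <= opnorm A * enorm y.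
Proof.
set w := A^T *m y.
have [w0|w_neq0] := eqVneq (enorm w) 0.
  by rewrite w0 mulr_ge0 ?opnorm_ge0 ?enorm_ge0.
have nw_gt0 : 0 < enorm w by rewrite lt_def w_neq0 enorm_ge0.
rewrite -(ler_pM2l nw_gt0) -expr2 sqr_enorm {1}/w dot_trmx_mull dotC.
apply: le_trans (dot_le_enorm _ _) _.
by rewrite mulrA ler_wpM2r ?enorm_ge0 // mulrC enorm_mulmx_le.
Qed.

End OperatorNorm.

Section Cocoercive.
Variable R : realType.
Implicit Types (m n : nat) (M c : R).

(* 1/M-cocoercivity, written without division so that M = 0 (e.g. A = 0) is allowed. *)
Definition cocoercive m M (G : 'cV[R]_m -> 'cV[R]_m) :=
  forall x y, dot (G x - G y) (G x - G y) <= M * dot (G x - G y) (x - y).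

Lemma cocoercive_monotone m M (G : 'cV[R]_m -> 'cV[R]_m) :
  0 <= M -> cocoercive M G -> forall x y, 0 <= dot (G x - G y) (x - y).
Proof.
move=> M_ge0 GM x y; have := GM x y.
have [<-|M_gt0] := eqVneq 0 M.
  rewrite mul0r => Gxy_le0.
  have : dot (G x - G y) (G x - G y) == 0 by rewrite eq_le Gxy_le0 dot_ge0.
  by rewrite dot_eq0 => /eqP ->; rewrite -(scale0r 0) dotZl mul0r.
have {}M_gt0 : 0 < M by rewrite lt_def eq_sym M_gt0.
by move/(le_trans (dot_ge0 _)); rewrite pmulr_rge0.
Qed.

Lemma cocoercive_step_nonexpansive m M c (G : 'cV[R]_m -> 'cV[R]_m) :
  0 <= M -> 0 <= c -> c * M <= 2 -> cocoercive M G ->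
  nonexpansive (fun x => x - c *: G x).
Proof.
move=> M_ge0 c_ge0 cM_le2 GM x y.
have -> : x - c *: G x - (y - c *: G y) = (x - y) - c *: (G x - G y).
  by rewrite scalerBr opprB [in RHS]opprB addrACA [in RHS]addrACA [- y + _]addrC.
have := cocoercive_monotone M_ge0 GM x y; have := GM x y.
set d := x - y; set w := G x - G y => Gw_le Gw_ge0.
clearbody d w.
have cw_le : c * dot w w <= 2 * dot w d.
  by rewrite (le_trans (ler_wpM2l c_ge0 Gw_le)) // mulrA ler_wpM2r.
rewrite ler_enorm dotBl !dotBr !dotZl !dotZr [dot d w]dotC.
have := ler_wpM2l c_ge0 cw_le; rewrite mulrCA; lra.
Qed.

Lemma nondecreasing_lipschitz_sqr_le (f : R -> R) L a b :
  nondecreasing_fun f -> lipschitz_with L f ->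
  (f a - f b) ^+ 2 <= L * ((f a - f b) * (a - b)).
Proof.
move=> f_mono f_lip.
have -> : (f a - f b) * (a - b) = `|f a - f b| * `|a - b|.
  have [ab|/ltW ba] := leP a b.
    by rewrite !ler0_norm ?subr_le0 ?f_mono // mulrNN.
  by rewrite !ger0_norm ?subr_ge0 ?f_mono.
by rewrite mulrCA -real_normK ?num_real // expr2 ler_wpM2l.
Qed.

Lemma cocoercive_cmap m (f : R -> R) L :
  nondecreasing_fun f -> lipschitz_with L f -> cocoercive L (@cmap R m f).
Proof.
move=> f_mono f_lip u v; rewrite dot_sqrE dotE mulr_sumr; apply: ler_sum => i _.
by rewrite !mxE nondecreasing_lipschitz_sqr_le.
Qed.

Lemma cocoercive_trmx_comp n m M (F : 'cV[R]_n -> 'cV[R]_n) (A : 'M[R]_(n, m)) b :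
  cocoercive M F -> cocoercive (M * opnorm A ^+ 2) (fun x => A^T *m F (A *m x + b)).
Proof.
move=> FM x y /=; rewrite -mulmxBr; set s := F _ - F _.
have -> : dot (A^T *m s) (x - y) = dot s ((A *m x + b) - (A *m y + b)).
  by rewrite dot_trmx_mull mulmxBr opprD addrACA subrr addr0.
have trmx_le : dot (A^T *m s) (A^T *m s) <= opnorm A ^+ 2 * dot s s.
  rewrite -!sqr_enorm -exprMn lerXn2r ?nnegrE ?mulr_ge0 ?enorm_ge0 ?opnorm_ge0 //.
  exact: enorm_trmx_mulmx_le.
rewrite (le_trans trmx_le) // -mulrA mulrCA ler_wpM2l ?sqr_ge0 //; exact: FM.
Qed.

End Cocoercive.

Theorem mainTheorem3 (R : realType) (n k : nat) (sigma : R -> R) (L : R)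
  (A : 'M[R]_(n, k)) (b : 'cV[R]_n) (h alpha : R) :
  0 < L -> nondecreasing_fun sigma -> lipschitz_with L sigma ->
  0 < h -> 0 < alpha -> alpha < 1 ->
  h * opnorm A ^+ 2 <= 2 * alpha / L ->
  averaged alpha (fun x : 'cV[R]_k => x - h *: (A^T *m cmap sigma (A *m x + b))).
Proof.
move=> L_gt0 sigma_mono sigma_lip h_gt0 alpha_gt0 _ hA.
pose G x := A^T *m cmap sigma (A *m x + b).
exists (fun x => x - (h / alpha) *: G x); split.
  apply: (@cocoercive_step_nonexpansive _ _ (L * opnorm A ^+ 2)).
  - by rewrite mulr_ge0 ?sqr_ge0 ?ltW.
  - by rewrite divr_ge0 ?ltW.
  - move: hA; rewrite ler_pdivlMr // mulrAC => hA.
    by rewrite mulrAC ler_pdivrMr // mulrA.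
  - exact/cocoercive_trmx_comp/cocoercive_cmap.
move=> x; rewrite scalerBr scalerA mulrCA divff ?gt_eqF // mulr1.
by rewrite scalerBl scale1r addrA subrK.
Qed.
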